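(* Let $\Gamma$ be a group acting by isometries on a $\delta$-hyperbolic length space $X$. Assume that $\Gamma$ has no parabolic subgroup and that every elliptic subgroup of $\Gamma$ is finite cyclic. Then $\nu(\Gamma,X)\leq 2$.
   Context: For a subgroup $H\le\Gamma$, its limit set $\Lambda(H)\subset\partial X$ is the set of accumulation points of an $H$-orbit. $H$ is elliptic (resp. parabolic, lineal) if $\Lambda(H)$ is empty (resp. has exactly one point, exactly two points), non-elementary if $\Lambda(H)$ has at least three points, and elementary otherwise. An element is loxodromic if its orbits have exactly two accumulation points in $\partial X$. The $\nu$-invariant $\nu(\Gamma,X)$ is the smallest integer $m$ such that, for all $\gamma_0,\gamma\in\Gamma$ with $\gamma$ loxodromic, if $\gamma_0,\gamma\gamma_0\gamma^{-1},\dots,\gamma^m\gamma_0\gamma^{-m}$ generate an elementary subgroup then so do $\gamma_0$ and $\gamma$. *)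

From Stdlib Require Import Reals List.
Open Scope R_scope.
Set Implicit Arguments.
Unset Strict Implicit.

Record Group := {
  gcar :> Type;
  gmul : gcar -> gcar -> gcar;
  ginv : gcar -> gcar;
  gone : gcar;
  gmulA : forall a b c, gmul a (gmul b c) = gmul (gmul a b) c;
  gmul1g : forall a, gmul gone a = a;
  gmulVg : forall a, gmul (ginv a) a = gone
}.

Arguments gmul : clear implicits.
Arguments ginv : clear implicits.
Arguments gone : clear implicits.

Section GroupDefs.
Variable G : Group.

Definition subgroup (H : G -> Prop) : Prop :=
  H (gone G) /\ (forall a b, H a -> H b -> H (gmul G a b)) /\
  (forall a, H a -> H (ginv G a)).

Definition gen (S : G -> Prop) (g : G) : Prop :=
  forall K : G -> Prop, subgroup K -> (forall s, S s -> K s) -> K g.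

Definition finite_set (H : G -> Prop) : Prop :=
  exists l : list G, forall x, H x -> In x l.

Definition cyclic_subgroup (H : G -> Prop) : Prop :=
  exists g0 : G, forall x, H x <-> gen (fun y => y = g0) x.

Definition finite_cyclic (H : G -> Prop) : Prop :=
  finite_set H /\ cyclic_subgroup H.

Fixpoint gpow (g : G) (k : nat) : G :=
  match k with O => gone G | S k' => gmul G g (gpow g k') end.

Definition conjpow (g a : G) (k : nat) : G :=
  gmul G (gmul G (gpow g k) a) (ginv G (gpow g k)).
End GroupDefs.

Record MetricSpace := {
  mcar :> Type;
  dist : mcar -> mcar -> R;
  dist_refl : forall x, dist x x = 0;
  dist_sep : forall x y, dist x y = 0 -> x = y;
  dist_sym : forall x y, dist x y = dist y x;
  dist_tri : forall x y z, dist x z <= dist x y + dist y z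
}.

Arguments dist : clear implicits.

Section MetricDefs.
Variable X : MetricSpace.

Definition curve_continuous (c : R -> X) : Prop :=
  forall t, 0 <= t <= 1 -> forall eps, 0 < eps -> exists eta, 0 < eta /\
    forall s, 0 <= s <= 1 -> Rabs (s - t) < eta -> dist X (c s) (c t) < eps.

Fixpoint poly_length (c : R -> X) (t0 : R) (ts : list R) : R :=
  match ts with
  | nil => 0
  | t1 :: ts' => dist X (c t0) (c t1) + poly_length c t1 ts'
  end.

Fixpoint increasing_from (t0 : R) (ts : list R) : Prop :=
  match ts with
  | nil => True
  | t1 :: ts' => t0 <= t1 /\ increasing_from t1 ts'
  end.

(** the length of c (sup over subdivisions 0 = t0 <= ... <= tn = 1) is <= L *)
Definition curve_length_le (c : R -> X) (L : R) : Prop :=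
  forall ts : list R, increasing_from 0 (ts ++ 1 :: nil) ->
    poly_length c 0 (ts ++ 1 :: nil) <= L.

Definition length_space : Prop :=
  forall x y eps, 0 < eps -> exists c : R -> X,
    curve_continuous c /\ c 0 = x /\ c 1 = y /\
    curve_length_le c (dist X x y + eps).

Definition gromov_product (w x y : X) : R :=
  (dist X w x + dist X w y - dist X x y) / 2.

Definition hyperbolic (delta : R) : Prop :=
  forall w x y z,
    Rmin (gromov_product w x z) (gromov_product w y z) - delta
      <= gromov_product w x y.

(** sequences converging at infinity / equivalent (same boundary point),
    with respect to a base point o *)
Definition conv_infty (o : X) (u : nat -> X) : Prop :=
  forall M, exists N, forall n m, (N <= n)%nat -> (N <= m)%nat ->
    M <= gromov_product o (u n) (u m).

Definition equiv_infty (o : X) (u v : nat -> X) : Prop :=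
  forall M, exists N, forall n m, (N <= n)%nat -> (N <= m)%nat ->
    M <= gromov_product o (u n) (v m).
End MetricDefs.

Definition isometric_action (G : Group) (X : MetricSpace) (act : G -> X -> X)
  : Prop :=
  (forall x, act (gone G) x = x) /\
  (forall g h x, act (gmul G g h) x = act g (act h x)) /\
  (forall g x y, dist X (act g x) (act g y) = dist X x y).

Section LimitSet.
Variables (G : Group) (X : MetricSpace) (act : G -> X -> X) (o : X).

(** h is a sequence in H whose orbit sequence h_n o converges to a point of
    the Gromov boundary; that point (the class of h_n o) lies in Lambda(H) *)
Definition limit_seq (H : G -> Prop) (h : nat -> G) : Prop :=
  (forall n, H (h n)) /\ conv_infty o (fun n => act (h n) o).

Definition distinct_pts (h1 h2 : nat -> G) : Prop :=
  ~ equiv_infty o (fun n => act (h1 n) o) (fun n => act (h2 n) o).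

(** Lambda(H) has at least 1 / 2 / 3 points *)
Definition lim_ge1 (H : G -> Prop) : Prop := exists h, limit_seq H h.
Definition lim_ge2 (H : G -> Prop) : Prop :=
  exists h1 h2, limit_seq H h1 /\ limit_seq H h2 /\ distinct_pts h1 h2.
Definition lim_ge3 (H : G -> Prop) : Prop :=
  exists h1 h2 h3, limit_seq H h1 /\ limit_seq H h2 /\ limit_seq H h3 /\
    distinct_pts h1 h2 /\ distinct_pts h1 h3 /\ distinct_pts h2 h3.

Definition elliptic (H : G -> Prop) : Prop := ~ lim_ge1 H.
Definition parabolic (H : G -> Prop) : Prop := lim_ge1 H /\ ~ lim_ge2 H.
Definition lineal (H : G -> Prop) : Prop := lim_ge2 H /\ ~ lim_ge3 H.
Definition nonelementary (H : G -> Prop) : Prop := lim_ge3 H.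
Definition elementary (H : G -> Prop) : Prop := ~ lim_ge3 H.

Definition loxodromic (g : G) : Prop := lineal (gen (fun y => y = g)).

Definition nu_property (m : nat) : Prop :=
  forall g0 g : G, loxodromic g ->
    elementary (gen (fun y => exists k, (k <= m)%nat /\ y = conjpow g g0 k)) ->
    elementary (gen (fun y => y = g0 \/ y = g)).

(** nu(Gamma, X) <= n : the least m with nu_property m exists and is <= n *)
Definition nu_le (n : nat) : Prop := exists m, (m <= n)%nat /\ nu_property m.
End LimitSet.

(* Let H1 = <g0, g g0 g^-1>; both H1 and its conjugate by g lie in
   H = <g0, g g0 g^-1, g^2 g0 g^-2>, which is elementary by assumption.
   If H1 is elliptic, it is finite cyclic, so the conjugate elements g0 and
   g g0 g^-1 have the same order and generate the same subgroup: g normalises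
   the finite group <g0>. Then <g0, g> = <g> <g0> stays at bounded distance from
   the orbit of <g>, whose limit set has only two points.
   Otherwise H1, not being parabolic, has two limit points a and b, and
   these form the whole limit set of H. As g0 and g conjugate H1 into H, both map
   {a, b} into itself, so <g0, g> stabilises the pair {a, b}; a group
   stabilising two boundary points has no third limit point. *)

From Stdlib Require Import Reals List Arith Lia Lra Classical IndefiniteDescription FinFun Wf_nat.
Local Open Scope nat_scope.

Local Notation "x <*> y" := (gmul _ x y) (at level 40, left associativity).
Local Notation "x ^-1" := (ginv _ x) (at level 2).
Local Notation "<[ c ]>" := (gen (fun y => y = c)).
Local Notation "<[ a ; b ]>" := (gen (fun y => y = a \/ y = b)).

Section GroupFacts.
Context {G : Group}.
Implicit Types a b c g h x y : G.

Lemma mulgV a : a <*> a^-1 = gone G.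
Proof.
  rewrite <- (gmul1g (a <*> a^-1)), <- (gmulVg (a^-1)) at 1.
  rewrite <- gmulA, (gmulA (a^-1) a), gmulVg, gmul1g.
  apply gmulVg.
Qed.

Lemma mulg1 a : a <*> gone G = a.
Proof. now rewrite <- (gmulVg a), gmulA, mulgV, gmul1g. Qed.

Lemma mulgI a b c : a <*> b = a <*> c -> b = c.
Proof.
  intro E. now rewrite <- (gmul1g b), <- (gmul1g c), <- (gmulVg a), <- !gmulA, E.
Qed.

Lemma invg_unique a b : a <*> b = gone G -> a^-1 = b.
Proof. intro E. apply (mulgI a). now rewrite mulgV, E. Qed.

Lemma invgK a : (a^-1)^-1 = a.
Proof. apply invg_unique, gmulVg. Qed.

Lemma invg1 : (gone G)^-1 = gone G.
Proof. apply invg_unique, gmul1g. Qed.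

Lemma invMg a b : (a <*> b)^-1 = b^-1 <*> a^-1.
Proof.
  apply invg_unique. now rewrite <- gmulA, (gmulA b), mulgV, gmul1g, mulgV.
Qed.

Lemma gpowD c i j : gpow c (i + j) = gpow c i <*> gpow c j.
Proof.
  induction i as [|i IH]; simpl; [now rewrite gmul1g | now rewrite IH, gmulA].
Qed.

Lemma gpow1 j : gpow (gone G) j = gone G.
Proof. induction j as [|j IH]; simpl; [reflexivity | now rewrite IH, gmul1g]. Qed.

Lemma gpowM c i j : gpow c (i * j) = gpow (gpow c i) j.
Proof.
  induction j as [|j IH]; simpl.
  - now rewrite Nat.mul_0_r.
  - rewrite <- IH, <- gpowD. f_equal. lia.
Qed.

Lemma gpow_conj h x k : gpow (h <*> x <*> h^-1) k = h <*> gpow x k <*> h^-1.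
Proof.
  induction k as [|k IH]; simpl.
  - now rewrite mulg1, mulgV.
  - rewrite IH, <- !gmulA. do 2 f_equal.
    now rewrite !gmulA, gmulVg, gmul1g.
Qed.

Lemma conjpow0 g (g0 : G) : conjpow g g0 0 = g0.
Proof. unfold conjpow; simpl. now rewrite gmul1g, invg1, mulg1. Qed.

Lemma conjpow1 g (g0 : G) : conjpow g g0 1 = g <*> g0 <*> g^-1.
Proof. unfold conjpow; simpl. now rewrite mulg1. Qed.

Lemma conjpow2 g (g0 : G) : conjpow g g0 2 = g <*> conjpow g g0 1 <*> g^-1.
Proof. rewrite conjpow1. unfold conjpow; simpl. now rewrite !mulg1, invMg, !gmulA. Qed.

Section Subgroup.
Context {K : G -> Prop}.
Hypothesis K_sub : subgroup K.

Lemma subgroup1 : K (gone G).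
Proof. apply K_sub. Qed.

Lemma subgroupM a b : K a -> K b -> K (a <*> b).
Proof. apply K_sub. Qed.

Lemma subgroupV a : K a -> K (a^-1).
Proof. apply K_sub. Qed.

Lemma subgroup_gpow c k : K c -> K (gpow c k).
Proof.
  intro Kc. induction k; simpl; [apply subgroup1 | now apply subgroupM].
Qed.

Lemma subgroup_conj h : subgroup (fun z => K (h <*> z <*> h^-1)).
Proof.
  split; [|split].
  - rewrite mulg1, mulgV. apply subgroup1.
  - intros a b Ka Kb.
    replace (h <*> (a <*> b) <*> h^-1)
      with ((h <*> a <*> h^-1) <*> (h <*> b <*> h^-1)) by
      (rewrite <- !gmulA; do 2 f_equal; now rewrite !gmulA, gmulVg, gmul1g).
    now apply subgroupM.
  - intros a Ka.
    replace (h <*> a^-1 <*> h^-1) with ((h <*> a <*> h^-1)^-1)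
      by now rewrite !invMg, invgK, gmulA.
    now apply subgroupV.
Qed.
End Subgroup.

Lemma gen_subgroup (S : G -> Prop) : subgroup (gen S).
Proof.
  split; [|split].
  - intros K HK _. now apply subgroup1.
  - intros a b Ha Hb K HK HS. apply subgroupM; [exact HK | apply Ha | apply Hb]; auto.
  - intros a Ha K HK HS. apply subgroupV; [exact HK | apply Ha]; auto.
Qed.

Lemma gen_incl (S : G -> Prop) s : S s -> gen S s.
Proof. intros Hs K _ HS. auto. Qed.

Lemma gen_min (S K : G -> Prop) :
  subgroup K -> (forall s, S s -> K s) -> forall z, gen S z -> K z.
Proof. intros HK HS z Hz. now apply Hz. Qed.

Lemma gen_conj (S K : G -> Prop) h :
  subgroup K -> (forall s, S s -> K (h <*> s <*> h^-1)) ->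
  forall z, gen S z -> K (h <*> z <*> h^-1).
Proof. intros HK. apply gen_min, subgroup_conj, HK. Qed.

Lemma gpow_in_gen1 c k : <[c]> (gpow c k).
Proof. apply subgroup_gpow; [apply gen_subgroup | now apply gen_incl]. Qed.

End GroupFacts.

Lemma pigeonhole_nat {A : Type} (f : nat -> A) (l : list A) :
  (forall i, In (f i) l) -> exists i j, (i < j) /\ f i = f j.
Proof.
  intro Hf. apply NNPP. intro Hn.
  assert (Hinj : Injective f).
  { intros i j E. destruct (Nat.lt_trichotomy i j) as [H|[H|H]]; auto;
      exfalso; apply Hn; eauto. }
  assert (Hincl : incl (map f (seq 0 (S (length l)))) l).
  { intros z Hz. apply in_map_iff in Hz. destruct Hz as [i [<- _]]. auto. }
  pose proof (NoDup_incl_length (Injective_map_NoDup Hinj (seq_NoDup _ _)) Hincl) as H.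
  rewrite length_map, length_seq in H. lia.
Qed.

Definition order_of {G : Group} (c : G) (n : nat) : Prop :=
  (0 < n) /\ gpow c n = gone G /\
  forall m, (0 < m) -> gpow c m = gone G -> (n <= m).

Section FiniteCyclic.
Context {G : Group}.
Implicit Types c h x y : G.

Lemma finite_gen1_order c : finite_set <[c]> -> exists n, order_of c n.
Proof.
  intros [l Hl].
  destruct (pigeonhole_nat (gpow c) l (fun i => Hl _ (gpow_in_gen1 c i)))
    as [i [j [Hij Eij]]].
  assert (Hper : exists n, (0 < n) /\ gpow c n = gone G).
  { exists (j - i). split; [lia|]. apply (mulgI (gpow c i)).
    rewrite <- gpowD, mulg1. now replace (i + (j - i)) with j by lia. }
  destruct (dec_inh_nat_subset_has_unique_least_element _ (fun n => classic _) Hper)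
    as [n [[[Hn0 Hn] Hmin] _]].
  exists n. repeat split; auto.
Qed.

Lemma order_dvd c n m : order_of c n -> gpow c m = gone G -> Nat.divide n m.
Proof.
  intros [Hn0 [Hn Hmin]] Hm.
  pose proof (Nat.div_mod m n ltac:(lia)) as Em.
  rewrite Em, gpowD, gpowM, Hn, gpow1, gmul1g in Hm.
  destruct (Nat.eq_dec (m mod n) 0) as [Z|Z].
  - exists (m / n). lia.
  - pose proof (Nat.mod_upper_bound m n ltac:(lia)).
    specialize (Hmin (m mod n) ltac:(lia) Hm). lia.
Qed.

Lemma gen1_elem_is_gpow c n z :
  (0 < n) -> gpow c n = gone G -> <[c]> z -> exists a, z = gpow c a.
Proof.
  intros Hn0 Hn. apply (gen_min _ (fun z => exists a, z = gpow c a)).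
  - split; [|split].
    + now exists 0.
    + intros p q [a ->] [b ->]. exists (a + b). now rewrite gpowD.
    + intros p [a ->]. exists (a * (n - 1)). apply invg_unique.
      rewrite <- gpowD. replace (a + a * (n - 1)) with (n * a) by nia.
      now rewrite gpowM, Hn, gpow1.
  - intros s ->. exists 1. simpl. now rewrite mulg1.
Qed.

Lemma gpow_gcd_gen1 c n a :
  gpow c n = gone G -> <[gpow c a]> (gpow c (Nat.gcd n a)).
Proof.
  intro Hn. assert (GS := gen_subgroup (fun y => y = gpow c a)).
  assert (Ha : <[gpow c a]> (gpow c a)) by now apply gen_incl.
  destruct (Nat.gcd_bezout n a) as [[u [v E]]|[u [v E]]].
  - replace (gpow c (Nat.gcd n a)) with ((gpow (gpow c a) v)^-1).
    { now apply subgroupV, subgroup_gpow. }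
    apply invg_unique. rewrite <- gpowM, <- gpowD.
    replace (a * v + Nat.gcd n a) with (n * u) by lia.
    now rewrite gpowM, Hn, gpow1.
  - replace (gpow c (Nat.gcd n a)) with (gpow (gpow c a) u).
    { now apply subgroup_gpow. }
    rewrite <- gpowM. replace (a * u) with (Nat.gcd n a + n * v) by lia.
    now rewrite gpowD, gpowM, Hn, gpow1, mulg1.
Qed.

Lemma finite_cyclic_gen1 c x y :
  finite_set <[c]> -> <[c]> x -> <[c]> y ->
  (forall k, gpow x k = gone G -> gpow y k = gone G) -> <[x]> y.
Proof.
  intros Hfin Hx Hy Hxy.
  destruct (finite_gen1_order c Hfin) as [n Hord].
  pose proof Hord as [Hn0 [Hn _]].
  destruct (gen1_elem_is_gpow c n x Hn0 Hn Hx) as [a ->].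
  destruct (gen1_elem_is_gpow c n y Hn0 Hn Hy) as [b ->].
  set (d := Nat.gcd n a).
  destruct (Nat.gcd_divide_l n a) as [r Hr]. fold d in Hr.
  destruct (Nat.gcd_divide_r n a) as [a' Ha']. fold d in Ha'.
  assert (Hr0 : r <> 0) by (intros ->; lia).
  assert (Hyr : gpow (gpow c b) r = gone G).
  { apply Hxy. rewrite <- gpowM.
    replace (a * r) with (n * a') by nia. now rewrite gpowM, Hn, gpow1. }
  rewrite <- gpowM in Hyr.
  pose proof (order_dvd c n _ Hord Hyr) as Hdvd.
  rewrite Hr, (Nat.mul_comm r d) in Hdvd.
  apply Nat.mul_divide_cancel_r in Hdvd; [|exact Hr0].
  destruct Hdvd as [b' ->].
  rewrite Nat.mul_comm, gpowM. apply subgroup_gpow; [apply gen_subgroup|].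
  now apply gpow_gcd_gen1.
Qed.

End FiniteCyclic.

Definition normalizes {G : Group} (N : G -> Prop) (j : G) : Prop :=
  forall n, N n -> N (j <*> n <*> j^-1) /\ N (j^-1 <*> n <*> j).

Section Normalizer.
Context {G : Group}.
Implicit Types g j : G.

Lemma normalizes_subgroup (N : G -> Prop) : subgroup (normalizes N).
Proof.
  split; [|split].
  - intros n Hn. now rewrite invg1, gmul1g, mulg1.
  - intros j1 j2 N1 N2 n Hn. split.
    + replace (j1 <*> j2 <*> n <*> (j1 <*> j2)^-1)
        with (j1 <*> (j2 <*> n <*> j2^-1) <*> j1^-1) by now rewrite invMg, !gmulA.
      now apply N1, N2.
    + replace ((j1 <*> j2)^-1 <*> n <*> (j1 <*> j2))
        with (j2^-1 <*> (j1^-1 <*> n <*> j1) <*> j2) by now rewrite invMg, !gmulA.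
      now apply N2, N1.
  - intros j Hj n Hn. rewrite invgK. split; apply Hj; auto.
Qed.

Lemma product_subgroup (N L : G -> Prop) :
  subgroup N -> subgroup L -> (forall j, L j -> normalizes N j) ->
  subgroup (fun k => exists j n, L j /\ N n /\ k = j <*> n).
Proof.
  intros NS LS LN. split; [|split].
  - exists (gone G), (gone G).
    split; [apply subgroup1, LS|]. split; [apply subgroup1, NS|].
    now rewrite mulg1.
  - intros k k' [j [n [Hj [Hn ->]]]] [j' [n' [Hj' [Hn' ->]]]].
    exists (j <*> j'), (j'^-1 <*> n <*> j' <*> n').
    split; [now apply subgroupM|]. split.
    + apply subgroupM; [exact NS | now apply LN | exact Hn'].
    + now rewrite !gmulA, <- (gmulA j j' (j'^-1)), mulgV, mulg1.
  - intros k [j [n [Hj [Hn ->]]]]. exists (j^-1), (j <*> n^-1 <*> j^-1).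
    split; [now apply subgroupV|]. split.
    + apply (LN j Hj). now apply subgroupV.
    + now rewrite invMg, !gmulA, gmulVg, gmul1g.
Qed.

Lemma gen2_sub_product g0 g :
  normalizes <[g0]> g ->
  forall k, <[g0; g]> k -> exists j n, <[g]> j /\ <[g0]> n /\ k = j <*> n.
Proof.
  intro Hg. apply gen_min.
  - apply product_subgroup; try apply gen_subgroup.
    apply gen_min; [apply normalizes_subgroup|]. now intros s ->.
  - intros s [-> | ->].
    + exists (gone G), g0. repeat split; [apply subgroup1, gen_subgroup | now apply gen_incl |].
      now rewrite gmul1g.
    + exists g, (gone G). repeat split; [now apply gen_incl | apply subgroup1, gen_subgroup |].
      now rewrite mulg1.
Qed.

Lemma conj_gen1_normalizes g0 g :
  <[g0]> (g <*> g0 <*> g^-1) -> <[g <*> g0 <*> g^-1]> g0 -> normalizes <[g0]> g.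
Proof.
  intros Hy Hx n Hn. assert (NS := gen_subgroup (fun y => y = g0)). split.
  - revert n Hn. apply gen_conj; [exact NS|]. now intros s ->.
  - replace (g^-1 <*> n <*> g) with (g^-1 <*> n <*> (g^-1)^-1) by now rewrite invgK.
    revert n Hn. apply gen_conj; [exact NS|]. intros s ->.
    apply (gen_conj (fun y => y = g <*> g0 <*> g^-1) _ (g^-1) NS); [|exact Hx].
    intros s ->.
    rewrite invgK, !gmulA, gmulVg, gmul1g, <- gmulA, gmulVg, mulg1.
    now apply gen_incl.
Qed.

Lemma finite_cyclic_conj_normalizes g0 g :
  finite_cyclic <[g0; g <*> g0 <*> g^-1]> -> normalizes <[g0]> g.
Proof.
  intros [[l Hl] [c Hc]].
  set (y := g <*> g0 <*> g^-1).
  assert (Hfin : finite_set <[c]>) by (exists l; intros z Hz; now apply Hl, Hc).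
  assert (Hg0 : <[c]> g0) by (apply (proj1 (Hc g0)), gen_incl; auto).
  assert (Hyc : <[c]> y) by (apply (proj1 (Hc y)), gen_incl; auto).
  assert (Ey : g^-1 <*> y <*> (g^-1)^-1 = g0).
  { unfold y. now rewrite invgK, !gmulA, gmulVg, gmul1g, <- gmulA, gmulVg, mulg1. }
  apply conj_gen1_normalizes.
  - apply (finite_cyclic_gen1 c g0 y Hfin Hg0 Hyc). intros k Hk. unfold y.
    now rewrite gpow_conj, Hk, mulg1, mulgV.
  - apply (finite_cyclic_gen1 c y g0 Hfin Hyc Hg0). intros k Hk. rewrite <- Ey.
    now rewrite gpow_conj, Hk, mulg1, mulgV.
Qed.

End Normalizer.

Local Open Scope R_scope.

Section GromovProduct.
Context {X : MetricSpace}.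
Implicit Types o p x y z : X.
Implicit Types u v : nat -> X.

Lemma gromov_product_sym o x y : gromov_product o x y = gromov_product o y x.
Proof. unfold gromov_product. rewrite (dist_sym x y). lra. Qed.

Lemma gromov_product_ge0 o x y : 0 <= gromov_product o x y.
Proof.
  unfold gromov_product. pose proof (dist_tri x o y). rewrite (dist_sym x o) in *. lra.
Qed.

Lemma gromov_product_le_dist o x y : gromov_product o x y <= dist X o x.
Proof. unfold gromov_product. pose proof (dist_tri o x y). lra. Qed.

Lemma gromov_product_self o x : gromov_product o x x = dist X o x.
Proof. unfold gromov_product. rewrite dist_refl. lra. Qed.

Lemma gromov_product_base_change o p x y :
  gromov_product p x y =
  dist X o p - gromov_product o p x - gromov_product o p y + gromov_product o x y.
Proof. unfold gromov_product. lra. Qed.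

Lemma gromov_product_base_le o p x y :
  gromov_product o x y - dist X o p <= gromov_product p x y.
Proof.
  rewrite (gromov_product_base_change o p x y).
  pose proof (gromov_product_le_dist o p x). pose proof (gromov_product_le_dist o p y). lra.
Qed.

Lemma gromov_product_close o x y x' y' D D' :
  dist X x x' <= D -> dist X y y' <= D' ->
  gromov_product o x y - D - D' <= gromov_product o x' y'.
Proof.
  intros Hx Hy. unfold gromov_product.
  pose proof (dist_tri o x' x). pose proof (dist_tri o y' y).
  pose proof (dist_tri x' x y'). pose proof (dist_tri x y y').
  rewrite (dist_sym x' x), (dist_sym y' y) in *. lra.
Qed.

Section Boundary.
Variable o : X.

(* [conv_infty o u] unfolds to [equiv_infty o u u], so the lemmas below apply to it too. *)

Lemma equiv_infty_close {u v u' v' D D'} :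
  (forall n, dist X (u n) (u' n) <= D) -> (forall n, dist X (v n) (v' n) <= D') ->
  equiv_infty o u v -> equiv_infty o u' v'.
Proof.
  intros Hu Hv E M. destruct (E (M + D + D')) as [N HN]. exists N. intros n m Hn Hm.
  specialize (HN n m Hn Hm).
  pose proof (gromov_product_close o _ _ _ _ _ _ (Hu n) (Hv m)). lra.
Qed.

Lemma equiv_infty_ext {u v} u' v' :
  (forall n, u n = u' n) -> (forall n, v n = v' n) ->
  equiv_infty o u v -> equiv_infty o u' v'.
Proof.
  intros Hu Hv. apply (@equiv_infty_close u v u' v' 0 0);
    intro n; [rewrite Hu | rewrite Hv]; rewrite dist_refl; apply Rle_refl.
Qed.

Lemma equiv_infty_sym {u v} : equiv_infty o u v -> equiv_infty o v u.
Proof.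
  intros E M. destruct (E M) as [N HN]. exists N. intros n m Hn Hm.
  rewrite gromov_product_sym. auto.
Qed.

Context {delta : R}.
Hypothesis X_hyp : hyperbolic X delta.

Lemma hyperbolic_delta_ge0 : 0 <= delta.
Proof.
  pose proof (X_hyp o o o o) as H. unfold gromov_product, Rmin in H.
  rewrite dist_refl in H. destruct (Rle_dec _ _); lra.
Qed.

Lemma gromov_product_chain x y z M :
  M <= gromov_product o x z -> M <= gromov_product o z y ->
  M - delta <= gromov_product o x y.
Proof.
  intros Hxz Hzy. pose proof (X_hyp o x y z) as H.
  rewrite (gromov_product_sym o y z) in H. unfold Rmin in H.
  destruct (Rle_dec _ _); lra.
Qed.

Lemma equiv_infty_trans {u v w} :
  equiv_infty o u v -> equiv_infty o v w -> equiv_infty o u w.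
Proof.
  intros E1 E2 M. destruct (E1 (M + delta)) as [N1 HN1].
  destruct (E2 (M + delta)) as [N2 HN2]. exists (Nat.max N1 N2). intros n m Hn Hm.
  assert (M + delta - delta <= gromov_product o (u n) (w m)); [|lra].
  apply gromov_product_chain with (z := v (Nat.max N1 N2));
    [apply HN1 | apply HN2]; lia.
Qed.

Lemma not_equiv_infty_bounded {u v} :
  conv_infty o u -> conv_infty o v -> ~ equiv_infty o u v ->
  exists B N, forall j k, (N <= j)%nat -> (N <= k)%nat ->
    gromov_product o (u j) (v k) <= B.
Proof.
  intros Cu Cv Huv. apply not_all_ex_not in Huv. destruct Huv as [M HM].
  pose proof hyperbolic_delta_ge0. remember (M + 2 * delta) as B eqn:EB.
  destruct (Cu B) as [N1 HN1]. destruct (Cv B) as [N2 HN2].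
  exists B, (Nat.max N1 N2). intros j k Hj Hk.
  apply Rnot_lt_le. intro Hjk. apply HM. exists (Nat.max N1 N2). intros n m Hn Hm.
  assert (B - delta <= gromov_product o (u n) (v k)).
  { apply gromov_product_chain with (z := u j); [apply HN1; lia | lra]. }
  assert (B - delta - delta <= gromov_product o (u n) (v m)); [|lra].
  apply gromov_product_chain with (z := v k); [assumption|].
  assert (B <= gromov_product o (v k) (v m)) by (apply HN2; lia). lra.
Qed.

Lemma equiv_infty_bounded {u v u' v' B N0} :
  equiv_infty o u u' -> equiv_infty o v v' ->
  (forall j k, (N0 <= j)%nat -> (N0 <= k)%nat -> gromov_product o (u j) (v k) <= B) ->
  exists N, forall k, (N <= k)%nat ->
    gromov_product o (u' k) (v' k) <= B + 2 * delta + 1.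
Proof.
  intros Eu Ev HB. remember (B + 2 * delta + 1) as M eqn:EM.
  pose proof hyperbolic_delta_ge0.
  destruct (Eu M) as [N1 HN1]. destruct (Ev M) as [N2 HN2].
  exists (Nat.max N0 (Nat.max N1 N2)). intros k Hk.
  apply Rnot_lt_le. intro Hlt.
  assert (M - delta <= gromov_product o (u k) (v' k)).
  { apply gromov_product_chain with (z := u' k); [apply HN1; lia | lra]. }
  assert (M - delta - delta <= gromov_product o (u k) (v k)).
  { apply gromov_product_chain with (z := v' k); [assumption|].
    rewrite gromov_product_sym.
    assert (M <= gromov_product o (v k) (v' k)) by (apply HN2; lia). lra. }
  assert (gromov_product o (u k) (v k) <= B) by (apply HB; lia). lra.
Qed.

End Boundary.
End GromovProduct.

Lemma list_bounded {A : Type} (f : A -> R) (l : list A) :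
  exists D, forall z, In z l -> f z <= D.
Proof.
  induction l as [|z0 l [D HD]].
  - exists 0. intros z [].
  - exists (Rmax (f z0) D). intros z [<- | Hz].
    + apply Rmax_l.
    + eapply Rle_trans; [apply HD, Hz | apply Rmax_r].
Qed.

Section Action.
Context {G : Group} {X : MetricSpace} (act : G -> X -> X) (o : X).
Hypothesis act_iso : isometric_action act.
Implicit Types g h k : G.
Implicit Types x y : X.
Implicit Types u v : nat -> X.

Local Notation "k *: u" := (fun n : nat => act k (u n)) (at level 40).
Local Notation orbit h := (fun n : nat => act (h n) o).

Lemma act_mul g h x : act (g <*> h) x = act g (act h x).
Proof. apply act_iso. Qed.

Lemma act_dist g x y : dist X (act g x) (act g y) = dist X x y.
Proof. apply act_iso. Qed.

Lemma act_invK h x : act h^-1 (act h x) = x.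
Proof. rewrite <- act_mul, gmulVg. apply act_iso. Qed.

Lemma gromov_product_act k x y :
  gromov_product o (act k x) (act k y) = gromov_product (act k^-1 o) x y.
Proof.
  unfold gromov_product.
  rewrite <- (act_dist k (act k^-1 o) x), <- (act_dist k (act k^-1 o) y), act_dist.
  now rewrite <- act_mul, mulgV, (proj1 act_iso).
Qed.

Lemma equiv_infty_act k u v : equiv_infty o u v -> equiv_infty o (k *: u) (k *: v).
Proof.
  intros E M. destruct (E (M + dist X o (act k^-1 o))) as [N HN]. exists N.
  intros n m Hn Hm. specialize (HN n m Hn Hm). rewrite gromov_product_act.
  pose proof (gromov_product_base_le o (act k^-1 o) (u n) (v m)). lra.
Qed.

Lemma equiv_infty_act_mul k1 k2 u v :
  equiv_infty o (k2 *: u) v -> equiv_infty o ((k1 <*> k2) *: u) (k1 *: v).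
Proof.
  intro E. apply (equiv_infty_act k1) in E.
  revert E. apply equiv_infty_ext; intro n; [now rewrite act_mul | reflexivity].
Qed.

Lemma equiv_infty_act_inv k u v :
  equiv_infty o (k *: u) v -> equiv_infty o (k^-1 *: v) u.
Proof.
  intro E. apply equiv_infty_sym. apply (equiv_infty_act k^-1) in E.
  revert E. apply equiv_infty_ext; intro n; [now rewrite act_invK | reflexivity].
Qed.

Lemma equiv_infty_act_cancel k u v :
  equiv_infty o (k *: u) (k *: v) -> equiv_infty o u v.
Proof.
  intro E. apply (equiv_infty_act k^-1) in E.
  revert E. apply equiv_infty_ext; intro n; now rewrite act_invK.
Qed.

Lemma limit_seq_shadow (K L : G -> Prop) D (h : nat -> G) :
  (forall k, K k -> exists j, L j /\ dist X (act j o) (act k o) <= D) ->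
  limit_seq act o K h ->
  exists J, limit_seq act o L J /\ forall n, dist X (act (J n) o) (act (h n) o) <= D.
Proof.
  intros HKL [Kh Ch].
  destruct (functional_choice _ (fun n => HKL (h n) (Kh n))) as [J HJ].
  exists J. split; [split|]; [intro n; apply HJ | | intro n; apply HJ].
  assert (HJ' : forall n, dist X (act (h n) o) (act (J n) o) <= D).
  { intro n. rewrite dist_sym. apply HJ. }
  exact (equiv_infty_close o HJ' HJ' Ch).
Qed.

Lemma lim_ge3_shadow (K L : G -> Prop) D :
  (forall k, K k -> exists j, L j /\ dist X (act j o) (act k o) <= D) ->
  lim_ge3 act o K -> lim_ge3 act o L.
Proof.
  intros HKL [h1 [h2 [h3 [L1 [L2 [L3 [D12 [D13 D23]]]]]]]].
  destruct (limit_seq_shadow _ _ _ _ HKL L1) as [J1 [M1 B1]].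
  destruct (limit_seq_shadow _ _ _ _ HKL L2) as [J2 [M2 B2]].
  destruct (limit_seq_shadow _ _ _ _ HKL L3) as [J3 [M3 B3]].
  exists J1, J2, J3. do 3 (split; [assumption|]). split; [|split]; intro E.
  - exact (D12 (equiv_infty_close o B1 B2 E)).
  - exact (D13 (equiv_infty_close o B1 B3 E)).
  - exact (D23 (equiv_infty_close o B2 B3 E)).
Qed.

Lemma finite_set_orbit_bounded (N : G -> Prop) :
  finite_set N -> exists D, forall n, N n -> dist X (act n o) o <= D.
Proof.
  intros [l Hl]. destruct (list_bounded (fun z => dist X (act z o) o) l) as [D HD].
  exists D. intros n Hn. apply HD, Hl, Hn.
Qed.

Lemma elementary_limit_set_sub_pair (K : G -> Prop) al be :
  elementary act o K -> limit_seq act o K al -> limit_seq act o K be ->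
  distinct_pts act o al be ->
  forall h : nat -> G, limit_seq act o K h ->
    equiv_infty o (orbit h) (orbit al) \/ equiv_infty o (orbit h) (orbit be).
Proof.
  intros Kel Lal Lbe Dab h Lh. apply NNPP. intro Hn. apply not_or_and in Hn.
  destruct Hn as [N1 N2]. apply Kel. exists al, be, h.
  do 3 (split; [assumption|]). split; [exact Dab|].
  split; intro E; [apply N1 | apply N2]; now apply equiv_infty_sym.
Qed.

Lemma conj_orbit_in_limit_set (H : G -> Prop) u v k (al : nat -> G) :
  (forall h : nat -> G, limit_seq act o H h ->
     equiv_infty o (orbit h) u \/ equiv_infty o (orbit h) v) ->
  conv_infty o (orbit al) -> (forall n, H (k <*> al n <*> k^-1)) ->
  equiv_infty o (k *: orbit al) u \/ equiv_infty o (k *: orbit al) v.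
Proof.
  intros Hlim Cal Hconj.
  set (h := fun n => k <*> al n <*> k^-1).
  set (D := dist X (act k^-1 o) o).
  assert (Hclose : forall n, dist X (act (h n) o) (act k (act (al n) o)) <= D).
  { intro n. unfold h. rewrite !act_mul, !act_dist. apply Rle_refl. }
  assert (Hclose' : forall n, dist X (act k (act (al n) o)) (act (h n) o) <= D).
  { intro n. rewrite dist_sym. apply Hclose. }
  assert (Ch : conv_infty o (orbit h)).
  { exact (equiv_infty_close o Hclose' Hclose' (equiv_infty_act k _ _ Cal)). }
  assert (Hzero : forall x : nat -> X, forall n, dist X (x n) (x n) <= 0).
  { intros x n. rewrite dist_refl. apply Rle_refl. }
  destruct (Hlim h (conj Hconj Ch)) as [E|E]; [left | right];
    exact (equiv_infty_close o Hclose (Hzero _) E).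
Qed.

Lemma elementary_gen2_of_finite_cyclic g0 g :
  loxodromic act o g -> finite_cyclic <[g0; conjpow g g0 1]> -> elementary act o <[g0; g]>.
Proof.
  intros [_ Hg] Hfc. rewrite conjpow1 in Hfc.
  assert (Hnorm := finite_cyclic_conj_normalizes g0 g Hfc).
  assert (Hfin : finite_set <[g0]>).
  { destruct Hfc as [[l Hl] _]. exists l. intros z Hz. apply Hl.
    revert z Hz. apply gen_min; [apply gen_subgroup|]. intros s ->. now apply gen_incl; left. }
  destruct (finite_set_orbit_bounded _ Hfin) as [D HD].
  intro H3. apply Hg. apply (lim_ge3_shadow <[g0; g]> _ D); [|exact H3].
  intros k Hk. destruct (gen2_sub_product g0 g Hnorm k Hk) as [j [n [Hj [Hn ->]]]].
  exists j. split; [exact Hj|].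
  rewrite act_mul, act_dist, dist_sym. now apply HD.
Qed.

Section Hyperbolic.
Context {delta : R}.
Hypothesis X_hyp : hyperbolic X delta.

Lemma elementary_of_limit_set_sub_pair (K : G -> Prop) u v :
  (forall h : nat -> G, limit_seq act o K h ->
     equiv_infty o (orbit h) u \/ equiv_infty o (orbit h) v) ->
  elementary act o K.
Proof.
  intros Hlim [h1 [h2 [h3 [L1 [L2 [L3 [D12 [D13 D23]]]]]]]].
  destruct (Hlim h1 L1) as [E1|E1]; destruct (Hlim h2 L2) as [E2|E2];
    destruct (Hlim h3 L3) as [E3|E3];
    first [ apply D12; exact (equiv_infty_trans o X_hyp E1 (equiv_infty_sym o E2))
          | apply D13; exact (equiv_infty_trans o X_hyp E1 (equiv_infty_sym o E3))
          | apply D23; exact (equiv_infty_trans o X_hyp E2 (equiv_infty_sym o E3)) ].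
Qed.

Section PairStabilizer.
Variables a b : nat -> X.
Hypotheses (a_conv : conv_infty o a) (b_conv : conv_infty o b).
Hypothesis ab_distinct : ~ equiv_infty o a b.

Definition stabilizes_pair k : Prop :=
  (equiv_infty o (k *: a) a /\ equiv_infty o (k *: b) b) \/
  (equiv_infty o (k *: a) b /\ equiv_infty o (k *: b) a).

Lemma stabilizes_pair_intro k :
  equiv_infty o (k *: a) a \/ equiv_infty o (k *: a) b ->
  equiv_infty o (k *: b) a \/ equiv_infty o (k *: b) b ->
  stabilizes_pair k.
Proof.
  unfold stabilizes_pair.
  intros [Ea|Ea] [Eb|Eb]; auto; exfalso; apply ab_distinct;
    apply (equiv_infty_act_cancel k), (equiv_infty_trans o X_hyp Ea);
    now apply equiv_infty_sym.
Qed.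

Lemma stabilizes_pair_subgroup : subgroup stabilizes_pair.
Proof.
  split; [|split].
  - left. split; [revert a_conv | revert b_conv];
      apply equiv_infty_ext; intro n; try reflexivity; symmetry; apply act_iso.
  - intros k1 k2 P1 P2. unfold stabilizes_pair in *.
    destruct P2 as [[Ea Eb]|[Ea Eb]];
      apply (equiv_infty_act_mul k1) in Ea; apply (equiv_infty_act_mul k1) in Eb;
      destruct P1 as [[Fa Fb]|[Fa Fb]];
      [left | right | right | left];
      split; eapply equiv_infty_trans; eauto.
  - intros k [[Ea Eb]|[Ea Eb]]; [left | right];
      split; now apply equiv_infty_act_inv.
Qed.

Lemma stabilizes_pair_bounded k B0 N0 :
  (forall j l, (N0 <= j)%nat -> (N0 <= l)%nat -> gromov_product o (a j) (b l) <= B0) ->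
  stabilizes_pair k ->
  exists N, forall l, (N <= l)%nat ->
    gromov_product o (act k (a l)) (act k (b l)) <= B0 + 2 * delta + 1.
Proof.
  intros HB [[Ea Eb]|[Ea Eb]].
  - exact (equiv_infty_bounded o X_hyp (equiv_infty_sym o Ea) (equiv_infty_sym o Eb) HB).
  - destruct (equiv_infty_bounded o X_hyp (equiv_infty_sym o Eb) (equiv_infty_sym o Ea) HB)
      as [N HN].
    exists N. intros l Hl. rewrite gromov_product_sym. now apply HN.
Qed.

(* Seen from [h n o], the Gromov product of [a l] and [b l] equals the one of
   [h_n^-1 a l] and [h_n^-1 b l] seen from [o], which stays bounded since h_n^-1
   preserves the pair; it would be large if [h n o] went to a third point. *)
Lemma pair_stabilizer_limit_point (h : nat -> G) :
  (forall n, stabilizes_pair (h n)^-1) -> conv_infty o (orbit h) ->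
  equiv_infty o (orbit h) a \/ equiv_infty o (orbit h) b.
Proof.
  intros Hstab Ch. apply NNPP. intro Hn. apply not_or_and in Hn. destruct Hn as [Na Nb].
  destruct (not_equiv_infty_bounded o X_hyp Ch a_conv Na) as [B1 [N1 HB1]].
  destruct (not_equiv_infty_bounded o X_hyp Ch b_conv Nb) as [B2 [N2 HB2]].
  destruct (not_equiv_infty_bounded o X_hyp a_conv b_conv ab_distinct) as [B0 [N0 HB0]].
  set (M := B0 + 2 * delta + 1).
  destruct (Ch (M + B1 + B2 + 1)) as [N3 HN3].
  set (n := Nat.max N3 (Nat.max N1 N2)).
  assert (Hfar : M + B1 + B2 + 1 <= dist X o (act (h n) o)).
  { rewrite <- gromov_product_self. apply HN3; unfold n; lia. }
  destruct (stabilizes_pair_bounded _ _ _ HB0 (Hstab n)) as [N HN].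
  set (l := Nat.max N (Nat.max N1 N2)).
  specialize (HN l ltac:(unfold l; lia)).
  rewrite gromov_product_act, invgK, (gromov_product_base_change o) in HN.
  assert (gromov_product o (act (h n) o) (a l) <= B1) by (apply HB1; unfold n, l; lia).
  assert (gromov_product o (act (h n) o) (b l) <= B2) by (apply HB2; unfold n, l; lia).
  pose proof (gromov_product_ge0 o (a l) (b l)).
  unfold M in *. lra.
Qed.

End PairStabilizer.

Lemma elementary_gen2_of_lim_ge2 g0 g :
  lim_ge2 act o <[g0; conjpow g g0 1]> ->
  elementary act o (gen (fun y : G => exists k : nat, (k <= 2)%nat /\ y = conjpow g g0 k)) ->
  elementary act o <[g0; g]>.
Proof.
  intros [al [be [Lal [Lbe Dab]]]] Hel.
  set (H1 := <[g0; conjpow g g0 1]>) in *.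
  set (H := gen (fun y : G => exists k : nat, (k <= 2)%nat /\ y = conjpow g g0 k)) in *.
  assert (H1S : subgroup H1) by apply gen_subgroup.
  assert (H1H : forall z, H1 z -> H z).
  { apply gen_min; [apply gen_subgroup|]. intros s [-> | ->]; apply gen_incl.
    - exists 0%nat. split; [lia | now rewrite conjpow0].
    - exists 1%nat. split; [lia | reflexivity]. }
  assert (H1gH : forall z, H1 z -> H (g <*> z <*> g^-1)).
  { apply gen_conj; [apply gen_subgroup|]. intros s [-> | ->]; apply gen_incl.
    - exists 1%nat. split; [lia | now rewrite conjpow1].
    - exists 2%nat. split; [lia | now rewrite conjpow2]. }
  assert (H1g0H : forall z, H1 z -> H (g0 <*> z <*> g0^-1)).
  { intros z Hz. apply H1H.
    assert (Hg0 : H1 g0) by (apply gen_incl; now left).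
    apply subgroupM; [exact H1S | apply subgroupM; auto | now apply subgroupV]. }
  assert (Hlim := elementary_limit_set_sub_pair H al be Hel
                    (conj (fun n => H1H _ (proj1 Lal n)) (proj2 Lal))
                    (conj (fun n => H1H _ (proj1 Lbe n)) (proj2 Lbe)) Dab).
  assert (Hstab : forall k, (forall z, H1 z -> H (k <*> z <*> k^-1)) ->
                    stabilizes_pair (orbit al) (orbit be) k).
  { intros k Hk. apply stabilizes_pair_intro; [exact Dab | |];
      apply (conj_orbit_in_limit_set H _ _ k _ Hlim);
      first [apply Lal | apply Lbe | intro n; apply Hk, Lal | intro n; apply Hk, Lbe]. }
  assert (Hsub : forall k, <[g0; g]> k -> stabilizes_pair (orbit al) (orbit be) k).
  { apply gen_min; [apply stabilizes_pair_subgroup; [apply Lal | apply Lbe]|].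
    intros s [-> | ->]; now apply Hstab. }
  apply (elementary_of_limit_set_sub_pair _ (orbit al) (orbit be)).
  intros h [Hh Ch].
  apply pair_stabilizer_limit_point; [apply Lal | apply Lbe | exact Dab | | exact Ch].
  intro n. apply Hsub, subgroupV; [apply gen_subgroup | apply Hh].
Qed.

End Hyperbolic.
End Action.

Theorem lemma3p8 (G : Group) (X : MetricSpace) (delta : R)
  (act : G -> X -> X) (o : X) :
  0 <= delta ->
  length_space X ->
  hyperbolic X delta ->
  isometric_action act ->
  (forall H : G -> Prop, subgroup H -> ~ parabolic act o H) ->
  (forall H : G -> Prop, subgroup H -> elliptic act o H -> finite_cyclic H) ->
  nu_le act o 2.
Proof.
  intros _ _ Hyp Ha Hnp Hell.
  exists 2%nat. split; [lia|]. intros g0 g Hlox Helem.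
  set (H1 := <[g0; conjpow g g0 1]>).
  destruct (classic (lim_ge1 act o H1)) as [Hne | Hempty].
  - apply (elementary_gen2_of_lim_ge2 act o Ha Hyp); [|exact Helem].
    apply NNPP. intro Hn. apply (Hnp H1 (gen_subgroup _)). now split.
  - apply (elementary_gen2_of_finite_cyclic act o Ha g0 g Hlox).
    exact (Hell H1 (gen_subgroup _) Hempty).
Qed.
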